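(* Let $p\ge1$. There is a constant $C>0$ depending only on $p$ such that for every $\mu$-complex $X\in\mathbb{R}^{n\times d}$ and every $\beta\in\mathbb{R}^d$, $$f(X\beta)\ge C\,\frac{n}{\mu}\,(1+\ln\mu),$$ i.e. $f(X\beta)=\Omega\!\left(\frac{n}{\mu}(1+\ln\mu)\right)$.
   Context: $\Phi_p(x)=\frac{p^{1-1/p}}{2\Gamma(1/p)}\int_{-\infty}^x \exp(-|t|^p/p)\,dt$, $g(r)=-\ln(\Phi_p(-r))$, and for $X$ with rows $x_i$, $f(X\beta)=\sum_{i=1}^n g(x_i\beta)$. $\mu_p(X)=\sup_{\beta\in\mathbb{R}^d\setminus\{0\}}\frac{\sum_{x_i\beta>0}|x_i\beta|^p}{\sum_{x_i\beta<0}|x_i\beta|^p}$, and $X$ is $\mu$-complex if $\mu_p(X)\le\mu<\infty$. *)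

From Stdlib Require Import Reals.
From Coquelicot Require Import Coquelicot.
Open Scope R_scope.

(* x^p for x >= 0, with the convention 0^p = 0 (p > 0). *)
Definition rpow (x p : R) : R := if Rlt_dec 0 x then Rpower x p else 0.

Fixpoint sumR (n : nat) (F : nat -> R) : R :=
  match n with O => 0 | S m => sumR m F + F m end.

Definition Gamma (s : R) : R :=
  RInt_gen (fun t => Rpower t (s - 1) * exp (- t)) (at_right 0) (Rbar_locally p_infty).

Definition Phi (p x : R) : R :=
  Rpower p (1 - 1 / p) / (2 * Gamma (1 / p)) *
  RInt_gen (fun t => exp (- rpow (Rabs t) p / p)) (Rbar_locally m_infty) (at_point x).

Definition g_loss (p r : R) : R := - ln (Phi p (- r)).

(* X : n x d matrix given by entries X i j (i < n, j < d); row x_i times beta. *)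
Definition rowmul (d : nat) (X : nat -> nat -> R) (beta : nat -> R) (i : nat) : R :=
  sumR d (fun j => X i j * beta j).

Definition f_loss (p : R) (n d : nat) (X : nat -> nat -> R) (beta : nat -> R) : R :=
  sumR n (fun i => g_loss p (rowmul d X beta i)).

Definition pos_part_sum (p : R) (n d : nat) X beta : R :=
  sumR n (fun i => if Rlt_dec 0 (rowmul d X beta i)
                   then rpow (Rabs (rowmul d X beta i)) p else 0).

Definition neg_part_sum (p : R) (n d : nat) X beta : R :=
  sumR n (fun i => if Rlt_dec (rowmul d X beta i) 0
                   then rpow (Rabs (rowmul d X beta i)) p else 0).

(* X is mu-complex: mu_p(X) = sup_{beta <> 0} pos/neg <= mu (mu a real number),
   written without division (a ratio c/0 with c > 0 counts as +oo). *)
Definition mu_complex (p : R) (n d : nat) (X : nat -> nat -> R) (mu : R) : Prop :=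
  forall beta : nat -> R, (exists j, (j < d)%nat /\ beta j <> 0) ->
    pos_part_sum p n d X beta <= mu * neg_part_sum p n d X beta.

(* Write [phi t = exp (- |t|^p / p)], [F b = \int_0^b phi] and [L = \int_0^oo phi].
   The substitution [t = y^p / p] gives [Gamma (1/p) = p^(1 - 1/p) L], hence
   [Phi_p x = (L + F x) / (2 L)] and [g r = - ln ((L - F r) / (2 L))].  The tail
   mass [L - F r] lies between [phi (r + 1)] and (for [r >= 1]) [exp (- r^p / p)],
   which yields [g r >= k exp (- C |r|^p)] for all [r] and [g r >= r^p / (3 p)]
   for [r >= 0].

   With [a_i = x_i beta], let [S+] and [S-] be the sums of [|a_i|^p] over the
   positive and the negative [a_i]; mu-complexity applied to [- beta] gives
   [S- <= mu S+].  Hence [f >= S+ / (3 p)] and, by convexity of [exp],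
   [f >= k n exp (- C (S+ + S-) / n) >= k n exp (- C (1 + mu) S+ / n)].  Whatever
   the value of [S+ / n], one of these two bounds is at least a constant times
   [n (1 + ln mu) / mu]. *)

From Stdlib Require Import Reals Lra Lia Classical.
From Coquelicot Require Import Coquelicot.
Open Scope R_scope.

Lemma exp_le_compat x y : x <= y -> exp x <= exp y.
Proof. intros [h| <-]; [left; apply exp_increasing; exact h | right; reflexivity]. Qed.

Lemma ln_le_sub1 x : 0 < x -> ln x <= x - 1.
Proof. intros hx. pose proof (exp_ineq1_le (ln x)). rewrite exp_ln in * by exact hx. lra. Qed.

Lemma Rpower_gt0 x y : 0 < Rpower x y.
Proof. apply exp_pos. Qed.

Lemma is_derive_Rpower_div p t : p <> 0 -> 0 < t ->
  is_derive (fun x => Rpower x p / p) t (Rpower t (p - 1)).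
Proof.
  intros hp ht. unfold Rpower. auto_derive; [exact ht|].
  replace (exp (p * ln t)) with (exp ((p - 1) * ln t) * exp (ln t))
    by (rewrite <- exp_plus; f_equal; ring).
  rewrite exp_ln by exact ht. field. lra.
Qed.

Lemma rpow_Rpower x p : 0 < x -> rpow x p = Rpower x p.
Proof. intros hx; unfold rpow; destruct (Rlt_dec 0 x); [reflexivity | lra]. Qed.

Lemma rpow_nonpos x p : x <= 0 -> rpow x p = 0.
Proof. intros hx; unfold rpow; destruct (Rlt_dec 0 x); [lra | reflexivity]. Qed.

Lemma rpow_ge0 x p : 0 <= rpow x p.
Proof. unfold rpow; destruct (Rlt_dec 0 x); [left; apply Rpower_gt0 | right; reflexivity]. Qed.

Lemma rpow_1 p : rpow 1 p = 1.
Proof. rewrite rpow_Rpower by lra. unfold Rpower. now rewrite ln_1, Rmult_0_r, exp_0. Qed.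

Lemma rpow_le_compat a b p : 0 <= p -> 0 <= a <= b -> rpow a p <= rpow b p.
Proof.
  intros hp [ha hab]. destruct (Req_dec a 0) as [->|ha0].
  - rewrite (rpow_nonpos 0) by lra. apply rpow_ge0.
  - rewrite !rpow_Rpower by lra. apply Rle_Rpower_l; lra.
Qed.

Lemma rpow_le_self x p : 1 <= p -> 0 <= x <= 1 -> rpow x p <= x.
Proof.
  intros hp hx. destruct (Req_dec x 0) as [->|hx0].
  - rewrite rpow_nonpos; lra.
  - rewrite rpow_Rpower by lra. unfold Rpower.
    assert (ln x <= 0) by (rewrite <- ln_1; apply ln_le; lra).
    rewrite <- (exp_ln x) at 2 by lra. apply exp_le_compat. nra.
Qed.

Lemma rpow_continuous p x : 1 <= p -> continuous (fun y => rpow y p) x.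
Proof.
  intros hp. destruct (Rtotal_order x 0) as [hx|[->|hx]].
  - apply (continuous_ext_loc _ (fun _ => 0)); [|apply continuous_const].
    apply (filter_imp (fun u => u < 0)); [|exact (open_lt 0 x hx)].
    intros y hy. now rewrite rpow_nonpos by lra.
  - apply continuity_pt_filterlim. intros eps heps.
    exists (Rmin 1 eps); split; [apply Rmin_pos; lra|].
    intros y [_ hy]. simpl in hy |- *. unfold R_dist in hy |- *.
    rewrite Rminus_0_r in hy. rewrite (rpow_nonpos 0), Rminus_0_r by lra.
    pose proof (Rmin_l 1 eps). pose proof (Rmin_r 1 eps).
    destruct (Rle_dec y 0).
    + rewrite rpow_nonpos, Rabs_R0 by lra. exact heps.
    + pose proof (rpow_le_self y p hp ltac:(split_Rabs; lra)).
      rewrite Rabs_pos_eq by apply rpow_ge0. split_Rabs; lra.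
  - apply (continuous_ext_loc _ (fun y => exp (p * ln y))).
    + apply (filter_imp (fun u => 0 < u)); [|exact (open_gt 0 x hx)].
      intros y hy. now rewrite rpow_Rpower.
    + apply (ex_derive_continuous (K := R_AbsRing) (V := R_NormedModule)).
      auto_derive. exact hx.
Qed.

Lemma Rpower_add1_le s p : 0 <= p -> 0 <= s -> Rpower (s + 1) p <= Rpower 2 p * (rpow s p + 1).
Proof.
  intros hp hs. set (m := Rmax s 1).
  assert (hm : s <= m /\ 1 <= m) by (split; [apply Rmax_l | apply Rmax_r]).
  assert (hsm : Rpower (s + 1) p <= Rpower 2 p * Rpower m p).
  { rewrite Rpower_mult_distr by lra. apply Rle_Rpower_l; lra. }
  assert (Rpower m p <= rpow s p + 1).
  { unfold m. destruct (Rle_dec s 1) as [hs1|hs1].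
    - rewrite Rmax_right by exact hs1. unfold Rpower. rewrite ln_1, Rmult_0_r, exp_0.
      pose proof (rpow_ge0 s p). lra.
    - rewrite Rmax_left, <- rpow_Rpower by lra. lra. }
  pose proof (Rpower_gt0 2 p). nra.
Qed.

Lemma sumR_ext n (f g : nat -> R) :
  (forall i, (i < n)%nat -> f i = g i) -> sumR n f = sumR n g.
Proof.
  induction n as [|n IH]; intros hfg; simpl; [reflexivity|].
  rewrite IH, hfg; [reflexivity | lia | intros; apply hfg; lia].
Qed.

Lemma sumR_le n (f g : nat -> R) :
  (forall i, (i < n)%nat -> f i <= g i) -> sumR n f <= sumR n g.
Proof.
  induction n as [|n IH]; intros hfg; simpl; [lra|].
  apply Rplus_le_compat; [apply IH; intros; apply hfg | apply hfg]; lia.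
Qed.

Lemma sumR_add n (f g : nat -> R) : sumR n (fun i => f i + g i) = sumR n f + sumR n g.
Proof. induction n as [|n IH]; simpl; [ring | rewrite IH; ring]. Qed.

Lemma sumR_scal n (a : R) (f : nat -> R) : sumR n (fun i => a * f i) = a * sumR n f.
Proof. induction n as [|n IH]; simpl; [ring | rewrite IH; ring]. Qed.

Lemma sumR_const n (c : R) : sumR n (fun _ => c) = INR n * c.
Proof. induction n as [|n IH]; [simpl; ring | rewrite S_INR; simpl; rewrite IH; ring]. Qed.

Lemma sumR_ge0 n (f : nat -> R) : (forall i, (i < n)%nat -> 0 <= f i) -> 0 <= sumR n f.
Proof. intros hf. rewrite <- (Rmult_0_r (INR n)), <- sumR_const. now apply sumR_le. Qed.

Lemma sumR_exp_ge n (u : nat -> R) : (0 < n)%nat ->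
  INR n * exp (sumR n u / INR n) <= sumR n (fun i => exp (u i)).
Proof.
  intros hn. assert (hN : 0 < INR n) by now apply lt_0_INR.
  set (m := sumR n u / INR n).
  assert (htangent : forall i, exp m * (1 - m) + exp m * u i <= exp (u i)).
  { intros i. replace (exp (u i)) with (exp m * exp (u i - m))
      by (rewrite <- exp_plus; f_equal; ring).
    pose proof (exp_ineq1_le (u i - m)). pose proof (exp_pos m). nra. }
  eapply Rle_trans; [|apply sumR_le; intros i _; apply htangent].
  rewrite sumR_add, sumR_const, sumR_scal. unfold m. right. field. lra.
Qed.

Lemma is_RInt_gen_primitive {Fa Fb : (R -> Prop) -> Prop} (f G : R -> R) (la lb : R) :
  Filter Fa -> Filter Fb ->
  filter_prod Fa Fb (fun ab => is_RInt f (fst ab) (snd ab) (G (snd ab) - G (fst ab))) ->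
  filterlim G Fa (locally la) -> filterlim G Fb (locally lb) ->
  is_RInt_gen f Fa Fb (lb - la).
Proof.
  intros FFa FFb hint hla hlb.
  apply (filterlimi_lim_ext_loc (fun ab => G (snd ab) - G (fst ab))); [exact hint|].
  apply (filterlim_comp_2 (G := locally lb) (H := locally la)
           (fun ab => G (snd ab)) (fun ab => G (fst ab)) Rminus).
  - exact (filterlim_comp _ _ _ _ _ _ _ _ filterlim_snd hlb).
  - exact (filterlim_comp _ _ _ _ _ _ _ _ filterlim_fst hla).
  - exact (filterlim_comp_2 fst (fun x => opp (snd x)) plus filterlim_fst
             (filterlim_comp _ _ _ _ _ _ _ _ filterlim_snd (filterlim_opp la))
             (filterlim_plus lb (opp la))).
Qed.

(** * The generalized normal density *)

Definition phi (p t : R) : R := exp (- rpow (Rabs t) p / p).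

Definition phi_prim (p b : R) : R := RInt (phi p) 0 b.

Section GeneralizedNormal.

Variable p : R.
Hypothesis hp : 1 <= p.

Lemma phi_gt0 t : 0 < phi p t.
Proof. apply exp_pos. Qed.

Lemma phi_even t : phi p (- t) = phi p t.
Proof. unfold phi. now rewrite Rabs_Ropp. Qed.

Lemma phi_le1 t : phi p t <= 1.
Proof.
  unfold phi. rewrite <- exp_0. apply exp_le_compat.
  pose proof (rpow_ge0 (Rabs t) p). assert (0 < / p) by (apply Rinv_0_lt_compat; lra).
  unfold Rdiv. nra.
Qed.

Lemma phi_decr a b : 0 <= a <= b -> phi p b <= phi p a.
Proof.
  intros hab. unfold phi. apply exp_le_compat. rewrite !Rabs_pos_eq by lra.
  pose proof (rpow_le_compat a b p ltac:(lra) hab).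
  apply Rmult_le_compat_r; [left; apply Rinv_0_lt_compat|]; lra.
Qed.

Lemma phi_continuous t : continuous (phi p) t.
Proof.
  apply continuous_exp_comp.
  apply (continuous_mult (K := R_AbsRing) (fun t => - rpow (Rabs t) p) (fun _ => / p));
    [|apply continuous_const].
  apply (continuous_opp (V := R_NormedModule)).
  apply (continuous_comp Rabs (fun y => rpow y p)); [apply continuous_Rabs|].
  now apply rpow_continuous.
Qed.

Lemma ex_RInt_phi a b : ex_RInt (phi p) a b.
Proof.
  apply (ex_RInt_continuous (V := R_CompleteNormedModule)). intros; apply phi_continuous.
Qed.

Lemma RInt_phi a b : RInt (phi p) a b = phi_prim p b - phi_prim p a.
Proof.
  unfold phi_prim.
  assert (RInt (phi p) 0 a + RInt (phi p) a b = RInt (phi p) 0 b)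
    by (apply (RInt_Chasles (V := R_CompleteNormedModule)); apply ex_RInt_phi).
  lra.
Qed.

Lemma is_RInt_phi a b : is_RInt (phi p) a b (phi_prim p b - phi_prim p a).
Proof.
  rewrite <- RInt_phi. apply (RInt_correct (V := R_CompleteNormedModule)), ex_RInt_phi.
Qed.

Lemma phi_prim_0 : phi_prim p 0 = 0.
Proof. apply (RInt_point (V := R_CompleteNormedModule)). Qed.

Lemma phi_prim_odd b : phi_prim p (- b) = - phi_prim p b.
Proof.
  unfold phi_prim.
  assert (h : is_RInt (fun y => - phi p y) 0 b (RInt (phi p) 0 (- b))).
  { apply (is_RInt_ext (V := R_NormedModule) (fun y => - phi p (- y))).
    { intros y _. now rewrite phi_even. }
    apply (is_RInt_comp_opp (V := R_NormedModule)). rewrite Ropp_0.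
    apply (RInt_correct (V := R_CompleteNormedModule)), ex_RInt_phi. }
  apply (is_RInt_unique (V := R_CompleteNormedModule)) in h.
  rewrite <- h. apply (RInt_opp (V := R_CompleteNormedModule)), ex_RInt_phi.
Qed.

Lemma phi_prim_derive x : is_derive (phi_prim p) x (phi p x).
Proof.
  apply (is_derive_RInt (V := R_NormedModule) (phi p) (phi_prim p) 0).
  - apply filter_forall. intros b.
    apply (RInt_correct (V := R_CompleteNormedModule)), ex_RInt_phi.
  - apply phi_continuous.
Qed.

Lemma phi_prim_le_compat a b : a <= b -> phi_prim p a <= phi_prim p b.
Proof.
  intros hab. cut (0 <= RInt (phi p) a b); [rewrite RInt_phi; lra|].
  apply RInt_ge_0; [exact hab | apply ex_RInt_phi | intros; left; apply phi_gt0].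
Qed.

Lemma phi_prim_sub_le a b : a <= b -> phi_prim p b - phi_prim p a <= b - a.
Proof.
  intros hab. rewrite <- RInt_phi.
  replace (b - a) with (RInt (fun _ => 1) a b)
    by (rewrite (RInt_const (V := R_CompleteNormedModule)); apply Rmult_1_r).
  apply RInt_le; [exact hab | apply ex_RInt_phi | apply (ex_RInt_const (V := R_NormedModule)) |].
  intros; apply phi_le1.
Qed.

Lemma phi_prim_sub_ge a b : 0 <= a <= b -> (b - a) * phi p b <= phi_prim p b - phi_prim p a.
Proof.
  intros hab. rewrite <- RInt_phi.
  replace ((b - a) * phi p b) with (RInt (fun _ => phi p b) a b)
    by apply (RInt_const (V := R_CompleteNormedModule)).
  apply RInt_le; [lra | apply (ex_RInt_const (V := R_NormedModule)) | apply ex_RInt_phi |].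
  intros; apply phi_decr; lra.
Qed.

(* On [[1, oo)], [phi t <= t^(p-1) phi t], the derivative of [- exp (- t^p / p)]. *)
Lemma phi_prim_sub_le_exp r b : 1 <= r <= b ->
  phi_prim p b - phi_prim p r <= exp (- Rpower r p / p).
Proof.
  intros hrb.
  set (h := fun t => - exp (- (Rpower t p / p))).
  set (dh := fun t => Rpower t (p - 1) * exp (- (Rpower t p / p))).
  assert (hint : is_RInt dh r b (h b - h r)).
  { apply (is_RInt_derive (V := R_CompleteNormedModule) h dh); intros t ht;
      rewrite Rmin_left, Rmax_right in ht by lra.
    - unfold dh.
      apply (is_derive_comp (fun u => - exp (- u)) (fun x => Rpower x p / p)).
      + auto_derive; [exact I | ring].
      + apply is_derive_Rpower_div; lra.
    - apply (ex_derive_continuous (K := R_AbsRing) (V := R_NormedModule)).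
      unfold dh, Rpower. auto_derive. lra. }
  rewrite <- RInt_phi.
  apply Rle_trans with (RInt dh r b).
  - apply RInt_le; [lra | apply ex_RInt_phi | eexists; exact hint |].
    intros t ht. unfold phi, dh. rewrite Rabs_pos_eq, rpow_Rpower by lra.
    rewrite <- (Rmult_1_l (exp _)) at 1. unfold Rdiv. rewrite Ropp_mult_distr_l.
    apply Rmult_le_compat_r; [left; apply exp_pos|].
    rewrite <- (Rpower_O t) at 1 by lra. apply Rle_Rpower; lra.
  - rewrite (is_RInt_unique (V := R_CompleteNormedModule) _ _ _ _ hint).
    unfold h, Rdiv. rewrite !Ropp_mult_distr_l. pose proof (exp_pos (- Rpower b p * / p)). lra.
Qed.

Lemma phi_prim_le2 b : phi_prim p b <= 2.
Proof.
  set (m := Rmax b 1).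
  assert (hbm : phi_prim p b <= phi_prim p m) by (apply phi_prim_le_compat, Rmax_l).
  pose proof (phi_prim_sub_le 0 1 ltac:(lra)) as h01. rewrite phi_prim_0 in h01.
  pose proof (phi_prim_sub_le_exp 1 m ltac:(split; [lra | apply Rmax_r])) as h1m.
  assert (exp (- Rpower 1 p / p) <= 1).
  { pose proof (Rpower_gt0 1 p). set (u := Rpower 1 p) in *.
    rewrite <- exp_0. apply exp_le_compat.
    assert (0 < / p) by (apply Rinv_0_lt_compat; lra). unfold Rdiv. nra. }
  lra.
Qed.

Lemma phi_prim_bounded : bound (fun y => exists b, y = phi_prim p b).
Proof. exists 2. intros y [b ->]. apply phi_prim_le2. Qed.

(* [\int_0^oo phi], as the supremum of the increasing bounded function [phi_prim]. *)
Definition phi_mass : R :=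
  proj1_sig (completeness _ phi_prim_bounded (ex_intro _ (phi_prim p 0) (ex_intro _ 0 eq_refl))).

Lemma phi_mass_lub : is_lub (fun y => exists b, y = phi_prim p b) phi_mass.
Proof. unfold phi_mass. destruct completeness as [m hm]. exact hm. Qed.

Lemma phi_prim_le_mass b : phi_prim p b <= phi_mass.
Proof. apply phi_mass_lub. now exists b. Qed.

Lemma phi_mass_le_ub m : (forall b, phi_prim p b <= m) -> phi_mass <= m.
Proof. intros hm. apply phi_mass_lub. intros y [b ->]. apply hm. Qed.

Lemma phi_mass_le2 : phi_mass <= 2.
Proof. apply phi_mass_le_ub, phi_prim_le2. Qed.

Lemma phi_mass_ge : exp (- 1 / p) <= phi_mass.
Proof.
  replace (exp (- 1 / p)) with (phi p 1) by (unfold phi; now rewrite Rabs_R1, rpow_1).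
  pose proof (phi_prim_sub_ge 0 1 ltac:(lra)) as h. rewrite phi_prim_0 in h.
  pose proof (phi_prim_le_mass 1). lra.
Qed.

Lemma phi_mass_gt0 : 0 < phi_mass.
Proof. pose proof phi_mass_ge. pose proof (exp_pos (- 1 / p)). lra. Qed.

Lemma phi_prim_cvg : filterlim (phi_prim p) (Rbar_locally p_infty) (locally phi_mass).
Proof.
  intros P [eps hP].
  assert (hb0 : exists b0, phi_mass - eps < phi_prim p b0).
  { apply NNPP. intros hn. pose proof (cond_pos eps).
    enough (phi_mass <= phi_mass - eps) by lra.
    apply phi_mass_le_ub. intros b. apply Rnot_lt_le. intros hb. apply hn. now exists b. }
  destruct hb0 as [b0 hb0]. exists b0. intros b hb. apply hP.
  pose proof (phi_prim_le_compat b0 b ltac:(lra)). pose proof (phi_prim_le_mass b).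
  change (Rabs (phi_prim p b - phi_mass) < eps). rewrite Rabs_left1; lra.
Qed.

Lemma phi_prim_cvg_m_infty :
  filterlim (phi_prim p) (Rbar_locally m_infty) (locally (- phi_mass)).
Proof.
  apply (filterlim_ext (fun b => - phi_prim p (- b))).
  { intros b. now rewrite phi_prim_odd, Ropp_involutive. }
  apply (filterlim_comp _ _ _ Ropp (fun y => - phi_prim p y) _ (Rbar_locally p_infty));
    [apply (filterlim_Rbar_opp m_infty)|].
  apply (filterlim_comp _ _ _ (phi_prim p) Ropp _ (locally phi_mass));
    [apply phi_prim_cvg | apply (filterlim_opp (V := R_NormedModule))].
Qed.

Lemma phi_tail_le r : 1 <= r -> phi_mass - phi_prim p r <= exp (- Rpower r p / p).
Proof.
  intros hr. cut (phi_mass <= phi_prim p r + exp (- Rpower r p / p)); [lra|].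
  apply phi_mass_le_ub. intros b. pose proof (exp_pos (- Rpower r p / p)).
  destruct (Rle_dec b r) as [hbr|hbr].
  - pose proof (phi_prim_le_compat b r hbr). lra.
  - pose proof (phi_prim_sub_le_exp r b ltac:(lra)). lra.
Qed.

Lemma phi_tail_ge s : 0 <= s -> phi p (s + 1) <= phi_mass - phi_prim p s.
Proof.
  intros hs. pose proof (phi_prim_sub_ge s (s + 1) ltac:(lra)).
  pose proof (phi_prim_le_mass (s + 1)). lra.
Qed.

Lemma phi_tail_gt0 s : 0 <= s -> 0 < phi_mass - phi_prim p s.
Proof. intros hs. pose proof (phi_tail_ge s hs). pose proof (phi_gt0 (s + 1)). lra. Qed.

Lemma is_RInt_gen_phi x :
  is_RInt_gen (phi p) (Rbar_locally m_infty) (at_point x) (phi_mass + phi_prim p x).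
Proof.
  replace (phi_mass + phi_prim p x) with (phi_prim p x - - phi_mass) by ring.
  apply (is_RInt_gen_primitive _ (phi_prim p));
    [apply Rbar_locally_filter | apply at_point_filter | | |].
  - apply filter_forall. intros ab. apply is_RInt_phi.
  - apply phi_prim_cvg_m_infty.
  - intros P hP. exact (locally_singleton _ _ hP).
Qed.

(** * The normalizing constant *)

Definition gamma_density (s t : R) : R := Rpower t (s - 1) * exp (- t).

Lemma gamma_density_continuous s t : 0 < t -> continuous (gamma_density s) t.
Proof.
  intros ht. apply (ex_derive_continuous (K := R_AbsRing) (V := R_NormedModule)).
  unfold gamma_density, Rpower. auto_derive. exact ht.
Qed.

(* The inverse of [y |-> y^p / p]: the substitution [t = y^p / p] in [Gamma (1/p)]. *)
Definition pow_div_inv (x : R) : R := Rpower (p * x) (1 / p).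

Lemma pow_div_inv_pow y : 0 < y -> pow_div_inv (Rpower y p / p) = y.
Proof.
  intros hy. unfold pow_div_inv.
  replace (p * (Rpower y p / p)) with (Rpower y p) by (field; lra).
  rewrite Rpower_mult. replace (p * (1 / p)) with 1 by (field; lra). now apply Rpower_1.
Qed.

Lemma pow_pow_div_inv x : 0 < x -> Rpower (pow_div_inv x) p / p = x.
Proof.
  intros hx. unfold pow_div_inv. rewrite Rpower_mult.
  replace (1 / p * p) with 1 by (field; lra). rewrite Rpower_1 by nra. field. lra.
Qed.

Lemma pow_div_inv_increasing x y : 0 < x < y -> pow_div_inv x < pow_div_inv y.
Proof.
  intros hxy. unfold pow_div_inv. apply Rlt_Rpower_l; [apply Rdiv_lt_0_compat | split]; nra.
Qed.

Lemma pow_div_inv_cvg_0 : filterlim pow_div_inv (at_right 0) (locally 0).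
Proof.
  intros P [eps hP]. pose proof (cond_pos eps) as heps.
  assert (hd : 0 < Rpower eps p / p) by (apply Rdiv_lt_0_compat; [apply Rpower_gt0 | lra]).
  exists (mkposreal _ hd). intros x hx hx0. apply hP.
  change (Rabs (x - 0) < Rpower eps p / p) in hx.
  change (Rabs (pow_div_inv x - 0) < eps).
  rewrite Rminus_0_r, Rabs_pos_eq in hx by lra.
  rewrite Rminus_0_r, Rabs_pos_eq by (left; apply Rpower_gt0).
  rewrite <- (pow_div_inv_pow eps) by exact heps. now apply pow_div_inv_increasing.
Qed.

Lemma pow_div_inv_cvg_p_infty :
  filterlim pow_div_inv (Rbar_locally p_infty) (Rbar_locally p_infty).
Proof.
  intros P [M hP]. set (m := Rmax M 1).
  assert (hm : 0 < m) by (unfold m; pose proof (Rmax_r M 1); lra).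
  exists (Rpower m p / p). intros x hx. apply hP.
  apply Rle_lt_trans with m; [apply Rmax_l|].
  rewrite <- (pow_div_inv_pow m) at 1 by exact hm. apply pow_div_inv_increasing.
  split; [apply Rdiv_lt_0_compat; [apply Rpower_gt0 | lra] | exact hx].
Qed.

Lemma gamma_density_pow_div y : 0 < y ->
  Rpower y (p - 1) * gamma_density (1 / p) (Rpower y p / p) = Rpower p (1 - 1 / p) * phi p y.
Proof.
  intros hy. unfold gamma_density, phi. rewrite Rabs_pos_eq, rpow_Rpower by lra.
  assert (hln : ln (Rpower y p / p) = p * ln y - ln p).
  { unfold Rdiv. rewrite ln_mult, ln_Rinv, ln_Rpower; [ring | lra | apply Rpower_gt0 |].
    apply Rinv_0_lt_compat; lra. }
  unfold Rpower at 2. rewrite hln. unfold Rpower.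
  rewrite <- Rmult_assoc, <- !exp_plus. f_equal. unfold Rdiv. field. lra.
Qed.

Lemma is_RInt_gamma_density_pow_div a b : 0 < a -> 0 < b ->
  is_RInt (gamma_density (1 / p)) (Rpower a p / p) (Rpower b p / p)
    (Rpower p (1 - 1 / p) * (phi_prim p b - phi_prim p a)).
Proof.
  intros ha hb.
  assert (hpos : forall y, Rmin a b <= y <= Rmax a b -> 0 < y).
  { intros y hy. pose proof (Rmin_glb_lt a b 0 ha hb). lra. }
  assert (hsubst : is_RInt (fun y => Rpower y (p - 1) * gamma_density (1 / p) (Rpower y p / p))
                     a b (RInt (gamma_density (1 / p)) (Rpower a p / p) (Rpower b p / p))).
  { apply (is_RInt_comp (V := R_CompleteNormedModule) _ (fun t => Rpower t p / p)).
    - intros y hy. apply gamma_density_continuous.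
      apply Rdiv_lt_0_compat; [apply Rpower_gt0 | lra].
    - intros y hy. specialize (hpos y hy). split.
      + apply is_derive_Rpower_div; lra.
      + apply (ex_derive_continuous (K := R_AbsRing) (V := R_NormedModule)).
        unfold Rpower. auto_derive. exact hpos. }
  assert (hext : is_RInt (fun y => Rpower p (1 - 1 / p) * phi p y) a b
                   (RInt (gamma_density (1 / p)) (Rpower a p / p) (Rpower b p / p))).
  { apply (is_RInt_ext (V := R_NormedModule)) with (2 := hsubst).
    intros y hy. apply gamma_density_pow_div, hpos. lra. }
  assert (hphi : is_RInt (fun y => Rpower p (1 - 1 / p) * phi p y) a b
                   (Rpower p (1 - 1 / p) * (phi_prim p b - phi_prim p a)))
    by apply (is_RInt_scal (V := R_NormedModule)), is_RInt_phi.
  rewrite <- (is_RInt_unique (V := R_CompleteNormedModule) _ _ _ _ hphi),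
    (is_RInt_unique (V := R_CompleteNormedModule) _ _ _ _ hext).
  apply (RInt_correct (V := R_CompleteNormedModule)).
  apply (ex_RInt_continuous (V := R_CompleteNormedModule)).
  intros z hz. apply gamma_density_continuous.
  assert (0 < Rpower a p / p) by (apply Rdiv_lt_0_compat; [apply Rpower_gt0 | lra]).
  assert (0 < Rpower b p / p) by (apply Rdiv_lt_0_compat; [apply Rpower_gt0 | lra]).
  pose proof (Rmin_glb_lt (Rpower a p / p) (Rpower b p / p) 0). lra.
Qed.

Lemma is_RInt_gen_gamma_density :
  is_RInt_gen (gamma_density (1 / p)) (at_right 0) (Rbar_locally p_infty)
    (Rpower p (1 - 1 / p) * phi_mass).
Proof.
  set (c := Rpower p (1 - 1 / p)).
  assert (hscale : forall u, continuous (fun v => c * v) u).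
  { intros u. apply (continuous_mult (K := R_AbsRing) (fun _ => c) (fun v => v));
      [apply continuous_const | apply continuous_id]. }
  replace (c * phi_mass) with (c * phi_mass - c * phi_prim p 0) by (rewrite phi_prim_0; ring).
  apply (is_RInt_gen_primitive _ (fun x => c * phi_prim p (pow_div_inv x)));
    [exact _ | apply Rbar_locally_filter | | |].
  - apply (Filter_prod _ _ _ (fun a => 0 < a) (fun b => 0 < b)).
    + exists (mkposreal 1 Rlt_0_1). intros a _ ha. exact ha.
    + exists 0. intros b hb. exact hb.
    + intros a b ha hb. simpl. rewrite <- Rmult_minus_distr_l.
      pose proof (is_RInt_gamma_density_pow_div (pow_div_inv a) (pow_div_inv b)
                    (Rpower_gt0 _ _) (Rpower_gt0 _ _)) as h.
      now rewrite !pow_pow_div_inv in h.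
  - apply (filterlim_comp _ _ _ pow_div_inv (fun u => c * phi_prim p u) _ (locally 0));
      [apply pow_div_inv_cvg_0|].
    apply (continuous_comp (phi_prim p) (fun v => c * v)); [|apply hscale].
    apply (ex_derive_continuous (K := R_AbsRing) (V := R_NormedModule)).
    eexists; apply phi_prim_derive.
  - apply (filterlim_comp _ _ _ pow_div_inv (fun u => c * phi_prim p u) _ (Rbar_locally p_infty));
      [apply pow_div_inv_cvg_p_infty|].
    apply (filterlim_comp _ _ _ (phi_prim p) (fun v => c * v) _ (locally phi_mass));
      [apply phi_prim_cvg | apply hscale].
Qed.

Lemma Gamma_inv : Gamma (1 / p) = Rpower p (1 - 1 / p) * phi_mass.
Proof.
  pose proof (Proper_StrongProper _ (at_right_proper_filter 0)) as hFa.
  pose proof (Proper_StrongProper _ (Rbar_locally_filter p_infty)) as hFb.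
  exact (@is_RInt_gen_unique R_CompleteNormedModule _ _ hFa hFb _ _ is_RInt_gen_gamma_density).
Qed.

Lemma Phi_eq x : Phi p x = (phi_mass + phi_prim p x) / (2 * phi_mass).
Proof.
  pose proof (Proper_StrongProper _ (Rbar_locally_filter m_infty)) as hFa.
  pose proof (Proper_StrongProper _ (at_point_filter x)) as hFb.
  pose proof (@is_RInt_gen_unique R_CompleteNormedModule _ _ hFa hFb _ _ (is_RInt_gen_phi x)) as h.
  unfold Phi. rewrite Gamma_inv. unfold phi in h. rewrite h.
  pose proof phi_mass_gt0. pose proof (Rpower_gt0 p (1 - 1 / p)). field. lra.
Qed.

(** * Lower bounds on the loss *)

Lemma g_loss_eq r : g_loss p r = - ln ((phi_mass - phi_prim p r) / (2 * phi_mass)).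
Proof. unfold g_loss. rewrite Phi_eq, phi_prim_odd. reflexivity. Qed.

Lemma g_loss_ge_ln2 r : 0 <= r -> ln 2 <= g_loss p r.
Proof.
  intros hr. rewrite g_loss_eq.
  pose proof phi_mass_gt0. pose proof (phi_tail_gt0 r hr).
  pose proof (phi_prim_le_compat 0 r hr) as hF. rewrite phi_prim_0 in hF.
  enough (ln ((phi_mass - phi_prim p r) / (2 * phi_mass)) <= ln (/ 2))
    by (rewrite ln_Rinv in *; lra).
  apply ln_le; [apply Rdiv_lt_0_compat; lra|].
  apply (Rmult_le_reg_r (2 * phi_mass)); [lra|]. field_simplify; lra.
Qed.

Lemma g_loss_opp_ge s : 0 <= s -> phi p (s + 1) / 4 <= g_loss p (- s).
Proof.
  intros hs. rewrite g_loss_eq, phi_prim_odd.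
  pose proof phi_mass_gt0. pose proof phi_mass_le2. pose proof (phi_tail_ge s hs).
  pose proof (phi_prim_le_compat 0 s hs) as hF. rewrite phi_prim_0 in hF.
  set (y := (phi_mass - phi_prim p s) / (2 * phi_mass)).
  replace ((phi_mass - - phi_prim p s) / (2 * phi_mass)) with (1 - y) by (unfold y; field; lra).
  assert (hy : y <= / 2).
  { unfold y. apply (Rmult_le_reg_r (2 * phi_mass)); [lra|]. field_simplify; lra. }
  pose proof (ln_le_sub1 (1 - y) ltac:(lra)).
  enough (phi p (s + 1) / 4 <= y) by lra.
  apply Rle_trans with (phi p (s + 1) / (2 * phi_mass)).
  - unfold Rdiv. apply Rmult_le_compat_l; [left; apply phi_gt0 | apply Rinv_le_contravar; lra].
  - unfold y, Rdiv. apply Rmult_le_compat_r; [left; apply Rinv_0_lt_compat|]; lra.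
Qed.

Lemma phi_add1_ge s : 0 <= s ->
  exp (- (Rpower 2 p / p)) * exp (- (Rpower 2 p / p) * rpow s p) <= phi p (s + 1).
Proof.
  intros hs. unfold phi. rewrite <- exp_plus. apply exp_le_compat.
  rewrite Rabs_pos_eq, (rpow_Rpower (s + 1)) by lra.
  pose proof (Rpower_add1_le s p ltac:(lra) hs) as h.
  assert (hinv : 0 < / p) by (apply Rinv_0_lt_compat; lra).
  apply (Rmult_le_compat_r (/ p)) in h; [|lra].
  unfold Rdiv. nra.
Qed.

Lemma g_loss_ge_exp r :
  exp (- (Rpower 2 p / p)) / 4 * exp (- (Rpower 2 p / p) * rpow (Rabs r) p) <= g_loss p r.
Proof.
  set (C := Rpower 2 p / p).
  assert (hC : 0 < C) by (apply Rdiv_lt_0_compat; [apply Rpower_gt0 | lra]).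
  destruct (Rle_dec 0 r) as [hr|hr].
  - assert (exp (- C) <= 1) by (rewrite <- exp_0; apply exp_le_compat; lra).
    assert (exp (- C * rpow (Rabs r) p) <= 1).
    { rewrite <- exp_0. apply exp_le_compat. pose proof (rpow_ge0 (Rabs r) p). nra. }
    pose proof (exp_pos (- C)). pose proof (exp_pos (- C * rpow (Rabs r) p)).
    pose proof (g_loss_ge_ln2 r hr). pose proof ln_lt_2. nra.
  - rewrite Rabs_left by lra.
    pose proof (phi_add1_ge (- r) ltac:(lra)) as hphi. fold C in hphi.
    pose proof (g_loss_opp_ge (- r) ltac:(lra)) as hg. rewrite Ropp_involutive in hg.
    unfold Rdiv in *. lra.
Qed.

Lemma g_loss_ge0 r : 0 <= g_loss p r.
Proof.
  eapply Rle_trans; [|apply g_loss_ge_exp].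
  pose proof (exp_pos (- (Rpower 2 p / p))).
  pose proof (exp_pos (- (Rpower 2 p / p) * rpow (Rabs r) p)). nra.
Qed.

Lemma g_loss_ge_pow_sub r : 1 <= r -> Rpower r p / p - 1 <= g_loss p r.
Proof.
  intros hr. rewrite g_loss_eq.
  pose proof (phi_tail_le r hr). pose proof (phi_tail_gt0 r ltac:(lra)).
  pose proof phi_mass_ge. pose proof (exp_pos (- 1 / p)).
  enough (ln ((phi_mass - phi_prim p r) / (2 * phi_mass)) <= 1 - Rpower r p / p) by lra.
  rewrite <- (ln_exp (1 - Rpower r p / p)).
  apply ln_le; [apply Rdiv_lt_0_compat; lra|].
  apply Rle_trans with (exp (- Rpower r p / p) / exp (- 1 / p)).
  - unfold Rdiv. apply Rmult_le_compat; try lra.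
    + left; apply Rinv_0_lt_compat; lra.
    + apply Rinv_le_contravar; lra.
  - unfold Rdiv at 1. rewrite <- exp_Ropp, <- exp_plus. apply exp_le_compat.
    assert (0 < / p <= 1).
    { split; [apply Rinv_0_lt_compat | rewrite <- Rinv_1; apply Rinv_le_contravar]; lra. }
    unfold Rdiv. lra.
Qed.

(* For [r >= 1], average [g r >= r^p / p - 1] and [g r >= ln 2 >= 1 / 2] with weights [1/3, 2/3]. *)
Lemma g_loss_ge_rpow r : 0 <= r -> rpow r p / (3 * p) <= g_loss p r.
Proof.
  intros hr. pose proof (g_loss_ge_ln2 r hr). pose proof ln_lt_2.
  destruct (Rle_dec r 1) as [hr1|hr1].
  - pose proof (rpow_le_self r p hp ltac:(lra)). pose proof (rpow_ge0 r p).
    assert (0 < / p <= 1).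
    { split; [apply Rinv_0_lt_compat | rewrite <- Rinv_1; apply Rinv_le_contravar]; lra. }
    apply Rle_trans with (/ 3); [|lra].
    unfold Rdiv. rewrite Rinv_mult. nra.
  - pose proof (g_loss_ge_pow_sub r ltac:(lra)). rewrite rpow_Rpower by lra.
    replace (Rpower r p / (3 * p)) with (/ 3 * (Rpower r p / p - 1) + 2 / 3 * / 2)
      by (field; lra).
    lra.
Qed.

End GeneralizedNormal.

Lemma rowmul_opp d X beta i : rowmul d X (fun j => - beta j) i = - rowmul d X beta i.
Proof.
  unfold rowmul. replace (- sumR d _) with (-1 * sumR d (fun j => X i j * beta j)) by ring.
  rewrite <- sumR_scal. apply sumR_ext. intros; ring.
Qed.

Lemma rowmul_eq0 d X beta i : (forall j, (j < d)%nat -> beta j = 0) -> rowmul d X beta i = 0.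
Proof.
  intros h0. unfold rowmul. transitivity (sumR d (fun _ => 0)); [|rewrite sumR_const; ring].
  apply sumR_ext. intros j hj. rewrite h0 by exact hj. ring.
Qed.

Lemma pos_part_sum_opp p n d X beta :
  pos_part_sum p n d X (fun j => - beta j) = neg_part_sum p n d X beta.
Proof.
  apply sumR_ext. intros i _. rewrite rowmul_opp, Rabs_Ropp.
  destruct (Rlt_dec 0 (- rowmul d X beta i)), (Rlt_dec (rowmul d X beta i) 0); lra.
Qed.

Lemma neg_part_sum_opp p n d X beta :
  neg_part_sum p n d X (fun j => - beta j) = pos_part_sum p n d X beta.
Proof.
  apply sumR_ext. intros i _. rewrite rowmul_opp, Rabs_Ropp.
  destruct (Rlt_dec (- rowmul d X beta i) 0), (Rlt_dec 0 (rowmul d X beta i)); lra.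
Qed.

Lemma pos_part_sum_ge0 p n d X beta : 0 <= pos_part_sum p n d X beta.
Proof. apply sumR_ge0. intros i _. destruct Rlt_dec; [apply rpow_ge0 | lra]. Qed.

Lemma sumR_rpow_abs_rowmul p n d X beta :
  sumR n (fun i => rpow (Rabs (rowmul d X beta i)) p)
  = pos_part_sum p n d X beta + neg_part_sum p n d X beta.
Proof.
  unfold pos_part_sum, neg_part_sum. rewrite <- sumR_add. apply sumR_ext. intros i _.
  destruct (Rlt_dec 0 (rowmul d X beta i)), (Rlt_dec (rowmul d X beta i) 0); try lra.
  replace (rowmul d X beta i) with 0 by lra. rewrite Rabs_R0, rpow_nonpos; lra.
Qed.

(* [mu_complex] bounds the ratio in the other direction too: apply it to [- beta]. *)
Lemma neg_part_sum_le p n d X mu beta : 0 <= mu -> mu_complex p n d X mu ->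
  neg_part_sum p n d X beta <= mu * pos_part_sum p n d X beta.
Proof.
  intros hmu hX.
  destruct (classic (exists j, (j < d)%nat /\ beta j <> 0)) as [[j [hj hbj]]|hzero].
  - rewrite <- (pos_part_sum_opp p n d X beta), <- (neg_part_sum_opp p n d X beta).
    apply hX. exists j. split; [exact hj | lra].
  - assert (hneg : neg_part_sum p n d X beta = 0).
    { unfold neg_part_sum. transitivity (sumR n (fun _ => 0)); [|rewrite sumR_const; ring].
      apply sumR_ext. intros i _. rewrite rowmul_eq0; [destruct Rlt_dec; lra|].
      intros j hj. apply NNPP. intros hbj. apply hzero. now exists j. }
    rewrite hneg. pose proof (pos_part_sum_ge0 p n d X beta). nra.
Qed.

Lemma f_loss_ge_pos_part p n d X beta : 1 <= p ->
  pos_part_sum p n d X beta / (3 * p) <= f_loss p n d X beta.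
Proof.
  intros hp. unfold f_loss, pos_part_sum, Rdiv. rewrite Rmult_comm, <- sumR_scal.
  apply sumR_le. intros i _. rewrite Rmult_comm. destruct Rlt_dec as [hpos|hpos].
  - rewrite Rabs_pos_eq by lra. apply g_loss_ge_rpow; lra.
  - rewrite Rmult_0_l. apply g_loss_ge0, hp.
Qed.

Lemma f_loss_ge_exp p n d X mu beta : 1 <= p -> (0 < n)%nat -> 0 < mu ->
  mu_complex p n d X mu ->
  INR n * (exp (- (Rpower 2 p / p)) / 4 *
           exp (- (Rpower 2 p / p) * (1 + mu) * (pos_part_sum p n d X beta / INR n)))
  <= f_loss p n d X beta.
Proof.
  intros hp hn hmu hX. set (C := Rpower 2 p / p). set (k := exp (- C) / 4).
  set (u := fun i => rpow (Rabs (rowmul d X beta i)) p).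
  assert (hC : 0 < C) by (apply Rdiv_lt_0_compat; [apply Rpower_gt0 | lra]).
  assert (hk : 0 < k) by (apply Rdiv_lt_0_compat; [apply exp_pos | lra]).
  assert (hN : 0 < INR n) by now apply lt_0_INR.
  assert (hsum : sumR n u <= (1 + mu) * pos_part_sum p n d X beta).
  { unfold u. rewrite sumR_rpow_abs_rowmul.
    pose proof (neg_part_sum_le p n d X mu beta ltac:(lra) hX). lra. }
  assert (hjensen := sumR_exp_ge n (fun i => - C * u i) hn).
  rewrite sumR_scal in hjensen.
  apply Rle_trans with (k * sumR n (fun i => exp (- C * u i))).
  - rewrite Rmult_comm, Rmult_assoc, (Rmult_comm _ (INR n)). apply Rmult_le_compat_l; [lra|].
    eapply Rle_trans; [|exact hjensen]. apply Rmult_le_compat_l; [lra|]. apply exp_le_compat.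
    assert (hdiv : sumR n u / INR n <= (1 + mu) * pos_part_sum p n d X beta / INR n)
      by (unfold Rdiv; apply Rmult_le_compat_r; [left; apply Rinv_0_lt_compat|]; lra).
    unfold Rdiv in *. nra.
  - unfold f_loss. rewrite <- sumR_scal. apply sumR_le. intros i _. apply g_loss_ge_exp, hp.
Qed.

Lemma one_add_ln_pos_gt_third x : 0 < x -> 0 < 1 + ln x -> 1 < 3 * x.
Proof.
  intros hx hl.
  assert (he : exp (- (1)) < x) by (rewrite <- (exp_ln x) by lra; apply exp_increasing; lra).
  rewrite exp_Ropp in he. pose proof exp_le_3. pose proof (exp_pos 1).
  apply (Rmult_lt_compat_l (exp 1)) in he; [|lra]. rewrite Rinv_r in he by lra. nra.
Qed.

(* With [w = sqrt x]: [1 + ln x = 1 + 2 ln w <= 2 w - 1 < 2 w]. *)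
Lemma one_add_ln_div_le x : 0 < x ->
  exp (- / 2) / 2 * ((1 + ln x) / x) <= exp (- ((1 + ln x) / 2)).
Proof.
  intros hx. set (l := ln x). set (w := exp (l / 2)).
  assert (hw : 0 < w) by apply exp_pos.
  assert (hww : w * w = x).
  { unfold w. rewrite <- exp_plus. replace (l / 2 + l / 2) with l by field. now apply exp_ln. }
  assert (hlw : 1 + l / 2 <= w) by apply exp_ineq1_le.
  replace (exp (- ((1 + l) / 2))) with (exp (- / 2) / w)
    by (unfold w, Rdiv; rewrite <- exp_Ropp, <- exp_plus; f_equal; field).
  rewrite <- hww. pose proof (exp_pos (- / 2)).
  apply (Rmult_le_reg_r (2 * w * w)); [nra|]. field_simplify; [nra | lra | lra].
Qed.

(* Split at [s = (1 + ln mu) / (2 C (1 + mu))]: above it the linear term is large enough,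
   below it [exp (- C (1 + mu) s) >= exp (- (1 + ln mu) / 2)]. *)
Lemma Rmax_lin_exp_ge c k C mu s : 0 < c -> 0 < k -> 0 < C -> 0 < mu -> 0 <= s ->
  Rmin (c / (8 * C)) (k * exp (- / 2) / 2) * ((1 + ln mu) / mu)
    <= Rmax (c * s) (k * exp (- C * (1 + mu) * s)).
Proof.
  intros hc hk hC hmu hs.
  set (K := Rmin (c / (8 * C)) (k * exp (- / 2) / 2)). set (l := 1 + ln mu).
  assert (hK : 0 < K).
  { apply Rmin_pos; apply Rdiv_lt_0_compat; try apply Rmult_lt_0_compat; try apply exp_pos; lra. }
  destruct (Rle_dec l 0) as [hl|hl].
  { apply Rle_trans with (c * s); [|apply Rmax_l].
    assert (0 <= / mu) by (left; apply Rinv_0_lt_compat; lra).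
    assert (l * / mu <= 0) by nra. unfold Rdiv. nra. }
  destruct (Rle_dec (l / (2 * C * (1 + mu))) s) as [hs1|hs1].
  - apply Rle_trans with (c * s); [|apply Rmax_l].
    pose proof (one_add_ln_pos_gt_third mu hmu ltac:(unfold l in hl; lra)).
    apply Rle_trans with (c / (8 * C) * (l / mu)).
    { apply Rmult_le_compat_r; [apply Rdiv_le_0_compat; lra | apply Rmin_l]. }
    apply Rle_trans with (c * (l / (2 * C * (1 + mu)))); [|apply Rmult_le_compat_l; lra].
    apply (Rmult_le_reg_r (8 * C * mu * (1 + mu) / c)); [apply Rdiv_lt_0_compat; nra|].
    field_simplify; [nra | lra | lra].
  - apply Rle_trans with (k * exp (- C * (1 + mu) * s)); [|apply Rmax_r].
    apply Rle_trans with (k * exp (- / 2) / 2 * (l / mu)).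
    { apply Rmult_le_compat_r; [apply Rdiv_le_0_compat; lra | apply Rmin_r]. }
    unfold Rdiv at 1. rewrite Rmult_assoc, Rmult_assoc. apply Rmult_le_compat_l; [lra|].
    rewrite <- Rmult_assoc. eapply Rle_trans; [apply one_add_ln_div_le, hmu|].
    apply exp_le_compat. apply Rnot_le_lt in hs1.
    apply (Rmult_lt_compat_l (2 * C * (1 + mu))) in hs1; [|nra].
    replace (2 * C * (1 + mu) * (l / (2 * C * (1 + mu)))) with l in hs1 by (field; lra).
    fold l. lra.
Qed.

Theorem lemma3 (p : R) (hp : 1 <= p) :
  exists C : R, 0 < C /\
    forall (n d : nat) (X : nat -> nat -> R) (mu : R),
      0 < mu -> mu_complex p n d X mu ->
      forall beta : nat -> R,
        f_loss p n d X beta >= C * (INR n / mu) * (1 + ln mu).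
Proof.
  set (C := Rpower 2 p / p). set (k := exp (- C) / 4). set (c := / (3 * p)).
  assert (hC : 0 < C) by (apply Rdiv_lt_0_compat; [apply Rpower_gt0 | lra]).
  assert (hk : 0 < k) by (apply Rdiv_lt_0_compat; [apply exp_pos | lra]).
  assert (hc : 0 < c) by (apply Rinv_0_lt_compat; lra).
  set (K := Rmin (c / (8 * C)) (k * exp (- / 2) / 2)).
  exists K. split.
  { apply Rmin_pos; apply Rdiv_lt_0_compat; try apply Rmult_lt_0_compat; try apply exp_pos; lra. }
  intros n d X mu hmu hX beta. apply Rle_ge.
  destruct n as [|n'].
  { unfold f_loss, sumR. simpl INR. unfold Rdiv. rewrite Rmult_0_l, Rmult_0_r, Rmult_0_l. lra. }
  set (N := INR (S n')). set (s := pos_part_sum p (S n') d X beta / N).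
  assert (hN : 0 < N) by (apply lt_0_INR; lia).
  assert (hs : 0 <= s) by (apply Rdiv_le_0_compat; [apply pos_part_sum_ge0 | lra]).
  replace (K * (N / mu) * (1 + ln mu)) with (N * (K * ((1 + ln mu) / mu))) by (field; lra).
  apply Rle_trans with (N * Rmax (c * s) (k * exp (- C * (1 + mu) * s))).
  { apply Rmult_le_compat_l; [lra | now apply Rmax_lin_exp_ge]. }
  apply Rmax_case.
  - replace (N * (c * s)) with (pos_part_sum p (S n') d X beta / (3 * p))
      by (unfold s, c; field; lra).
    now apply f_loss_ge_pos_part.
  - apply f_loss_ge_exp; [exact hp | lia | exact hmu | exact hX].
Qed.
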